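(* Assume regular conditional distributions $P_{Y|X}$ and $P_{X|Y}$ exist. Let $h>0$ be a density w.r.t. $P_X$ of some probability measure $Q^\ast_X$ on $(\Omega_X,\mathcal H)$, and let $g_0>0$ be a density w.r.t. $P_Y$ of a probability measure on $(\Omega_Y,\mathcal G)$. Define recursively for $n=0,1,\dots$ $$q^{(n)}_{Y|X=x}(y)=\frac{g_n(y)}{\int g_n(z)\,P_{Y|X=x}(dz)},\qquad g_{n+1}(y)=\int q^{(n)}_{Y|X=x}(y)\,h(x)\,P_{X|Y=y}(dx),$$ for $x\in\Omega_X$, $y\in\Omega_Y$. Then: (i) all $q^{(n)}_{Y|X=x}$ ($x\in\Omega_X$, $n\ge0$) are positive and probability densities with respect to $P_{Y|X=x}$, and all $g_n$ ($n\ge1$) are positive and probability densities with respect to $P_Y$. (ii) Let $Q^{(n)}$ be the probability measure on $(\Omega,\mathcal F)$ with $\frac{dQ^{(n)}}{dP}=g_n(Y)$ and $h_n=\frac{dQ^{(n)}_X}{dP_X}=E_P[g_n(Y)\mid X=\cdot]$. Assume that all integrals involved exist and are finite, in particular $E_P[h(X)\,|\log h(X)|]<\infty$ and $E_P[h(X)\,|\log h_n(X)|]<\infty$ for all $n$. Then $$\mathrm{KL}_{P_X}(h\,\|\,h_{n+1})\le\mathrm{KL}_{P_X}(h\,\|\,h_n)\quad\text{for all } n=0,1,\dots$$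
   Context: Setting: $(\Omega_X,\mathcal H)$ and $(\Omega_Y,\mathcal G)$ are measurable spaces, $\Omega=\Omega_X\times\Omega_Y$, $\mathcal F=\mathcal H\otimes\mathcal G$, and $X,Y$ are the coordinate projections. $P$ is a probability measure on $(\Omega,\mathcal F)$ with marginals $P_X,P_Y$. A regular conditional distribution of $Y$ given $X$ under $P$ is a map $(x,G)\mapsto P_{Y|X=x}[G]$ on $\Omega_X\times\mathcal G$ that is $\mathcal H$-measurable in $x$ for each $G$, a probability measure in $G$ for each $x$, and satisfies $P[Y\in G\mid X=x]=P_{Y|X=x}[G]$ for $P_X$-a.e. $x$, for every $G\in\mathcal G$; $P_{X|Y}$ is defined analogously. Kullback–Leibler divergence: for a probability space $(\overline\Omega,\mathcal M,\mu)$ and measurable $\lambda_0,\lambda_1\ge0$ with $\int\lambda_i\,d\mu=1$, $\mu[\lambda_i=0]=0$ ($i=0,1$) and $\int\lambda_0|\log(\lambda_0/\lambda_1)|\,d\mu<\infty$, $\mathrm{KL}_\mu(\lambda_0\|\lambda_1)=\int\lambda_0\log(\lambda_0/\lambda_1)\,d\mu$.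
   Formalization: The integrals $\int g_n(z)\,P_{Y|X=x}(dz)$ and $\int q^{(n)}_{Y|X=x}(y)\,h(x)\,P_{X|Y=y}(dx)$ are assumed finite for every n, x and y, a hypothesis that also governs part (i). The paper assumes this as well. *)

From HB Require Import structures.
From mathcomp Require Import all_boot all_order all_algebra.
From mathcomp Require Import all_classical all_reals all_analysis.
Set Implicit Arguments. Unset Strict Implicit. Unset Printing Implicit Defensive.
Import Order.TTheory GRing.Theory Num.Theory.
Local Open Scope classical_set_scope.
Local Open Scope ring_scope.

Section marginals.
Context d1 d2 (TX : measurableType d1) (TY : measurableType d2) (R : realType).

Definition projX : (TX * TY)%type -> TX := fst.
Definition projY : (TX * TY)%type -> TY := snd.
HB.instance Definition _ := isMeasurableFun.Build _ _ _ _ projX measurable_fst.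
HB.instance Definition _ := isMeasurableFun.Build _ _ _ _ projY measurable_snd.

Definition margX (P : probability (TX * TY)%type R) := distribution P projX.
Definition margY (P : probability (TX * TY)%type R) := distribution P projY.

(** k is a regular conditional distribution of Y given X under P:
    k is a probability kernel (measurable in x, probability in G) and
    x |-> k x G is a version of P[Y in G | X = x], i.e. (definition of
    conditional probability) for all measurable H, G,
    P[X in H, Y in G] = \int_H k x G dP_X(x). *)
Definition is_rcd_YgivenX (P : probability (TX * TY)%type R)
    (k : R.-pker TX ~> TY) :=
  forall (H : set TX) (G : set TY), measurable H -> measurable G ->
    P (H `*` G) = (\int[margX P]_(x in H) k x G)%E.

Definition is_rcd_XgivenY (P : probability (TX * TY)%type R)
    (k : R.-pker TY ~> TX) :=
  forall (H : set TX) (G : set TY), measurable H -> measurable G ->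
    P (H `*` G) = (\int[margY P]_(y in G) k y H)%E.

(** The recursion:
    q^(n)_{Y|X=x}(y) = g_n(y) / \int g_n(z) P_{Y|X=x}(dz)
    g_{n+1}(y) = \int q^(n)_{Y|X=x}(y) h(x) P_{X|Y=y}(dx)
    (integrals taken in \bar R, then converted to reals with [fine];
     their finiteness is a hypothesis of the theorem). *)
Section recursion.
Variables (kYX : R.-pker TX ~> TY) (kXY : R.-pker TY ~> TX)
  (h : TX -> R) (g0 : TY -> R).

Definition qstep (g : TY -> R) (x : TX) (y : TY) : R :=
  g y / fine (\int[kYX x]_z (g z)%:E)%E.

Definition gstep (g : TY -> R) (y : TY) : R :=
  fine (\int[kXY y]_x (qstep g x y * h x)%:E)%E.

Fixpoint gseq (n : nat) : TY -> R :=
  match n with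
  | 0%N => g0
  | n'.+1 => gstep (gseq n')
  end.

Definition qseq (n : nat) : TX -> TY -> R := qstep (gseq n).

End recursion.
End marginals.

Definition KL d (T : measurableType d) (R : realType)
    (mu : {measure set T -> \bar R}) (l0 l1 : T -> R) : \bar R :=
  (\int[mu]_x (l0 x * ln (l0 x / l1 x))%:E)%E.

From HB Require Import structures.
From mathcomp Require Import all_boot all_order all_algebra.
From mathcomp Require Import all_classical all_reals all_analysis.
From mathcomp Require Import measurable_realfun ring lra.
Set Implicit Arguments. Unset Strict Implicit. Unset Printing Implicit Defensive.
Import Order.TTheory GRing.Theory Num.Theory.
Local Open Scope classical_set_scope.
Local Open Scope ring_scope.

(* Write c_n(x) = \int g_n dP_{Y|X=x}, so that q_n(x, .) = g_n / c_n(x).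
   Disintegrating P along P_{Y|X} and along P_{X|Y} shows that every g_n is
   a P_Y-density and that c_n is a version of h_n, hence
   KL(h || h_n) - KL(h || h_{n+1}) = \int h ln m dP_X with m = c_{n+1} / c_n.
   For r = g_{n+1} / g_n, applying ln t >= 1 - 1/t to m / r and to r gives
   ln m >= 2 - r / m - 1 / r.  Integrate this against h(x) q_n(x, y) dP(x, y):
   h q_n r / m = h q_{n+1} and h q_n / r = q_n h g_n / g_{n+1} both have
   P-integral 1, so \int h ln m >= 0.  The positive and negative parts of
   h ln m are integrated separately, since only nonnegative integrands may be
   split freely. *)

Lemma ln_ge1_subV (R : realType) (t : R) : 0 < t -> 1 - t^-1 <= ln t.
Proof.
move=> t0; have ti0 : 0 < t^-1 by rewrite invr_gt0.
have := @le_ln1Dx R (t^-1 - 1); rewrite addrCA subrr addr0 lnV ?posrE //.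
by move=> /(_ ltac:(lra)); lra.
Qed.

Lemma ln_ge2_sub (R : realType) (m r : R) : 0 < m -> 0 < r ->
  2 - r / m - r^-1 <= ln m.
Proof.
move=> m0 r0; have := ln_ge1_subV (divr_gt0 m0 r0); rewrite invf_div.
have := ln_ge1_subV r0.
by rewrite lnM ?posrE ?invr_gt0 // lnV ?posrE //; lra.
Qed.

Section measurable_inverse.
Context d (T : measurableType d) (R : realType).
Implicit Type f : T -> R.

Let measurable_funV_ge0 f : measurable_fun [set: T] f ->
  (forall x, 0 <= f x) -> measurable_fun [set: T] (fun x => (f x)^-1).
Proof.
move=> mf f0.
rewrite (_ : (fun x => _) =
    (fun x => \1_(~` [set 0]) (f x) * expR (- ln (f x)))); last first.
  apply/funext => x; rewrite indicE.
  have [->|fx0] := eqVneq (f x) 0.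
    by rewrite invr0 memNset ?mul0r //= => /(_ erefl).
  rewrite mem_set /=; last exact/eqP.
  by rewrite mul1r expRN lnK // posrE lt0r fx0 f0.
apply: measurable_funM.
  by apply: measurableT_comp => //; apply/measurable_indic/measurableC.
apply: measurableT_comp => //; apply: measurableT_comp => //.
exact: measurableT_comp.
Qed.

Lemma measurable_funV f : measurable_fun [set: T] f ->
  measurable_fun [set: T] (fun x => (f x)^-1).
Proof.
move=> mf; rewrite (_ : (fun x => _) = (fun x => f x * (f x * f x)^-1)).
  apply: measurable_funM => //; apply: measurable_funV_ge0 => [|x].
    exact: measurable_funM.
  by rewrite -expr2 sqr_ge0.
apply/funext => x; have [->|fx0] := eqVneq (f x) 0; first by rewrite invr0 mul0r.
by rewrite invfM mulrA divff ?mul1r.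
Qed.

End measurable_inverse.

Section positive_integral.
Local Open Scope ereal_scope.
Context d (T : measurableType d) (R : realType) (mu : {measure set T -> \bar R}).

Lemma integral_gt0 (f : T -> R) : 0 < mu [set: T] ->
  measurable_fun [set: T] f -> (forall x, (0 < f x)%R) ->
  0 < \int[mu]_x (f x)%:E.
Proof.
move=> mu0 mf f0; rewrite lt0e integral_ge0 ?andbT; last first.
  by move=> x _; rewrite lee_fin ltW.
apply/negP => /eqP I0.
have mEf : measurable_fun [set: T] (fun x => (f x)%:E) by exact/measurable_EFinP.
have : \int[mu]_(x in [set: T]) `|(f x)%:E| = 0.
  by rewrite -I0; apply: eq_integral => x _; rewrite gee0_abs // lee_fin ltW.
case/(ae_eq_integral_abs mu measurableT mEf) => N [mN N0 TN].
have : mu [set: T] <= mu N.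
  apply: le_measure; rewrite ?inE //.
  by move=> x _; apply: TN => /= /(_ I) [] /eqP; rewrite gt_eqF.
by rewrite N0 leNgt mu0.
Qed.

End positive_integral.

Lemma integral_EFin_indic d (T : measurableType d) (R : realType)
    (mu : {measure set T -> \bar R}) (D : set T) (f : T -> R) :
  (\int[mu]_(x in D) (f x)%:E = \int[mu]_x (\1_D x * f x)%:E)%E.
Proof.
rewrite integral_mkcond; apply: eq_integral => x _; rewrite patchE indicE.
by case: (x \in D); rewrite ?mul1r ?mul0r.
Qed.

Section integrable_ln.
Local Open Scope ereal_scope.
Context d (T : measurableType d) (R : realType) (mu : {measure set T -> \bar R}).

Lemma integral_ge0_funrneg_le_funrpos (f : T -> R) :
  mu.-integrable [set: T] (EFin \o f) ->
  \int[mu]_x (f^\- x)%:E <= \int[mu]_x (f^\+ x)%:E ->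
  0 <= \int[mu]_x (f x)%:E.
Proof.
move=> intf le_np; rewrite integralE funerpos funerneg sube_ge0 //.
by rewrite (integrable_fin_num measurableT (integrable_funrneg measurableT intf)).
Qed.

Lemma integrable_mul_ln_div (w u v : T -> R) :
  measurable_fun [set: T] w -> measurable_fun [set: T] u ->
  measurable_fun [set: T] v -> (forall x, (0 <= w x)%R) ->
  (forall x, (0 < u x)%R) -> (forall x, (0 < v x)%R) ->
  mu.-integrable [set: T] (fun x => (w x * `|ln (u x)|)%:E) ->
  mu.-integrable [set: T] (fun x => (w x * `|ln (v x)|)%:E) ->
  mu.-integrable [set: T] (fun x => (w x * ln (u x / v x))%:E).
Proof.
move=> mw mu_ mv w_ge0 u_gt0 v_gt0 intu intv.
apply: le_integrable (integrableD measurableT intu intv) => //.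
- apply/measurable_EFinP/measurable_funM => //; apply: measurableT_comp => //.
  by apply: measurable_funM => //; exact: measurable_funV.
- move=> x _; rewrite -EFinD !abse_EFin lee_fin normrM (ger0_norm (w_ge0 x)).
  rewrite [X in (_ <= X)%R]ger0_norm ?addr_ge0 ?mulr_ge0 // -mulrDr ler_wpM2l //.
  by rewrite lnM ?posrE ?invr_gt0 // lnV ?posrE // ler_normB.
Qed.

End integrable_ln.

Section disintegration.
Local Open Scope ereal_scope.
Context d1 d2 (T1 : measurableType d1) (T2 : measurableType d2) (R : realType).
Variables (mu : probability T1 R) (k : R.-pker T1 ~> T2).

Definition kgraph (x : T1) : {measure set (T1 * T2) -> \bar R}.
Proof. refine (pushforward (k x) (pair x)); exact: pair1_measurable. Defined.

Lemma kgraphE x A : kgraph x A = k x (xsection A x).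
Proof.
rewrite /kgraph /pushforward; congr (k x _).
by apply/seteqP; split => y /=; rewrite /xsection /= inE.
Qed.

Let kgraph_snd : (unit * T1)%type -> {measure set (T1 * T2) -> \bar R} :=
  kgraph \o snd.

Let measurable_kgraph_snd U : measurable U ->
  measurable_fun [set: unit * T1] (kgraph_snd ^~ U).
Proof.
move=> mU; rewrite (_ : (fun p => _) = (fun x => k x (xsection U x)) \o snd).
  apply: measurableT_comp => //.
  apply: (measurable_fun_xsection_finite_kernel (k : R.-fker _ ~> _)).
  by rewrite inE.
by apply/funext => p; rewrite /= kgraphE.
Qed.

HB.instance Definition _ :=
  isKernel.Build _ _ _ _ _ kgraph_snd measurable_kgraph_snd.

Let kgraph_snd_prob p : kgraph_snd p [set: T1 * T2] = 1.
Proof.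
rewrite /kgraph_snd /= kgraphE (_ : xsection _ _ = setT) ?prob_kernel //.
by apply/seteqP; split => y //= _; rewrite /xsection /= inE.
Qed.

HB.instance Definition _ :=
  Kernel_isProbability.Build _ _ _ _ _ kgraph_snd kgraph_snd_prob.

Let kmu := kprobability
  (measurable_cst (mu : pprobability T1 R) : measurable_fun [set: unit] _).

Lemma integral_disintegration (P : {measure set (T1 * T2) -> \bar R}) :
  (forall H G, measurable H -> measurable G ->
     P (H `*` G) = \int[mu]_(x in H) k x G) ->
  forall f : T1 * T2 -> \bar R, measurable_fun [set: T1 * T2] f ->
  (forall w, 0 <= f w) ->
  \int[P]_w f w = \int[mu]_x \int[k x]_y f (x, y).
Proof.
move=> PE f mf f0.
(* P and the composition of mu with [kgraph] agree on rectangles. *)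
have PkE A : measurable A -> P A = (kmu \; kgraph_snd) tt A.
  apply: (measure_unique _ (fun _ => setT)).
  - exact: measurable_prod_measurableType.
  - move=> _ _ [X1 mX1 [X2 mX2 <-]] [Y1 mY1 [Y2 mY2 <-]].
    exists (X1 `&` Y1); first exact: measurableI.
    by exists (X2 `&` Y2); [exact: measurableI|rewrite setXI].
  - by move=> _; exists setT => //; exists setT => //; rewrite setXTT.
  - by rewrite bigcup_const.
  - move=> _ [H mH [G mG <-]]; rewrite PE // /= /kcomp [LHS]integral_mkcond.
    apply: eq_integral => x _; rewrite /kgraph_snd /= kgraphE /patch.
    case: ifPn => xH; first by rewrite in_xsectionX.
    by rewrite notin_xsectionX // measure0.
  - move=> _; rewrite -setXTT PE // (eq_integral (fun=> 1)); last first.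
      by move=> x _; rewrite prob_kernel.
    by rewrite integral_cst // mul1e (le_lt_trans (probability_le1 _ _)) ?ltey.
rewrite (eq_measure_integral ((kmu \; kgraph_snd) tt)); last first.
  by move=> A mA _; exact: PkE.
rewrite integral_kcomp //; apply: eq_integral => x _.
by rewrite /kgraph_snd /= /kgraph ge0_integral_pushforward.
Qed.

End disintegration.

Definition mswap d1 d2 (T1 : measurableType d1) (T2 : measurableType d2)
    (R : realType) (P : {measure set (T1 * T2) -> \bar R}) :
    {measure set (T2 * T1) -> \bar R}.
Proof. refine (pushforward P unstable.swap); exact: measurable_swap. Defined.

Lemma integral_disintegration_swap d1 d2 (T1 : measurableType d1)
    (T2 : measurableType d2) (R : realType) (mu : probability T2 R)
    (k : R.-pker T2 ~> T1) (P : {measure set (T1 * T2) -> \bar R}) :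
  (forall H G, measurable H -> measurable G ->
     P (H `*` G) = (\int[mu]_(y in G) k y H)%E) ->
  forall f : T1 * T2 -> \bar R, measurable_fun [set: T1 * T2] f ->
  (forall w, (0 <= f w)%E) ->
  (\int[P]_w f w = \int[mu]_y \int[k y]_x f (x, y))%E.
Proof.
move=> PE f mf f0.
have -> : (\int[P]_w f w = \int[mswap P]_w (f \o unstable.swap) w)%E.
  rewrite [RHS]ge0_integral_pushforward //; last 3 first.
  - exact: measurable_swap.
  - by apply: measurableT_comp => //; exact: measurable_swap.
  - by move=> w _; exact: f0.
  by rewrite preimage_setT; apply: eq_integral => -[].
apply: integral_disintegration => [G H mG mH||w].
- rewrite /mswap /= /pushforward (_ : _ @^-1` _ = H `*` G) ?PE //.
  by apply/seteqP; split => -[x y] /= [].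
- by apply: measurableT_comp => //; exact: measurable_swap.
- exact: f0.
Qed.

(* [fine] sends an infinite integral to 0; every use below comes with a
   finiteness hypothesis. *)
Definition kint d1 d2 (T1 : measurableType d1) (T2 : measurableType d2)
    (R : realType) (k : R.-ker T1 ~> T2) (g : T2 -> R) (x : T1) : R :=
  fine (\int[k x]_y (g y)%:E)%E.

Section kernel_integral.
Local Open Scope ereal_scope.
Context d1 d2 (T1 : measurableType d1) (T2 : measurableType d2) (R : realType).
Variables (k : R.-pker T1 ~> T2) (g : T2 -> R).
Hypotheses (mg : measurable_fun [set: T2] g) (g_gt0 : forall y, (0 < g y)%R)
  (g_fin : forall x, \int[k x]_y (g y)%:E < +oo).

Lemma measurable_kint : measurable_fun [set: T1] (kint k g).
Proof.
apply: measurableT_comp => //; apply: measurable_fun_integral_kernel.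
- exact: measurable_kernel.
- by move=> y; rewrite lee_fin ltW.
- exact/measurable_EFinP.
Qed.

Lemma kintE x : (kint k g x)%:E = \int[k x]_y (g y)%:E.
Proof.
rewrite fineK // ge0_fin_numE ?g_fin //.
by apply: integral_ge0 => y _; rewrite lee_fin ltW.
Qed.

Lemma kint_gt0 x : (0 < kint k g x)%R.
Proof.
by apply: fine_gt0; rewrite g_fin andbT integral_gt0 ?prob_kernel ?lte01.
Qed.

End kernel_integral.

Section recursion_step.
Local Open Scope ereal_scope.
Context d1 d2 (TX : measurableType d1) (TY : measurableType d2) (R : realType).
Variables (P : probability (TX * TY)%type R)
  (kYX : R.-pker TX ~> TY) (kXY : R.-pker TY ~> TX) (h : TX -> R).
Hypotheses (rYX : is_rcd_YgivenX P kYX) (rXY : is_rcd_XgivenY P kXY)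
  (mh : measurable_fun [set: TX] h) (h_gt0 : forall x, (0 < h x)%R)
  (int_h : \int[margX P]_x (h x)%:E = 1).

Local Notation PX := (margX P).
Local Notation PY := (margY P).

Variable g : TY -> R.
Hypotheses (mg : measurable_fun [set: TY] g) (g_gt0 : forall y, (0 < g y)%R)
  (g_fin : forall x, \int[kYX x]_y (g y)%:E < +oo).

Local Notation q := (qstep kYX g).
Local Notation g' := (gstep kYX kXY h g).

Hypothesis qh_fin : forall y, \int[kXY y]_x (q x y * h x)%:E < +oo.

Let kintg_gt0 x : (0 < kint kYX g x)%R.
Proof. exact: kint_gt0. Qed.

Let kint_ge0 x : (0 <= kint kYX g x)%R.
Proof. exact/ltW. Qed.

Let measurable_kintV : measurable_fun [set: TX] (fun x => (kint kYX g x)^-1)%R.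
Proof. exact: measurable_funV (measurable_kint _ mg g_gt0). Qed.

Lemma measurable_qstep x : measurable_fun [set: TY] (q x).
Proof. exact: measurable_funM. Qed.

Lemma measurable_qstep_pair : measurable_fun [set: TX * TY] (fun w => q w.1 w.2).
Proof.
apply: measurable_funM; first exact: measurableT_comp.
exact: measurableT_comp measurable_kintV measurable_fst.
Qed.

Lemma qstep_gt0 x y : (0 < q x y)%R.
Proof. by rewrite divr_gt0 // kintg_gt0. Qed.

Lemma integral_qstep x : \int[kYX x]_y (q x y)%:E = 1.
Proof.
under eq_integral do rewrite EFinM muleC.
rewrite ge0_integralZl //.
- by rewrite -(kintE g_gt0 g_fin) -EFinM mulVf // gt_eqF // kintg_gt0.
- exact/measurable_EFinP.
- by move=> y _; rewrite lee_fin ltW.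
- by rewrite lee_fin invr_ge0; exact: kint_ge0.
Qed.

Lemma integral_qstep_fst (psi : TX -> R) : measurable_fun [set: TX] psi ->
  (forall x, (0 <= psi x)%R) ->
  \int[P]_w (psi w.1 * q w.1 w.2)%:E = \int[PX]_x (psi x)%:E.
Proof.
move=> mpsi psi_ge0; rewrite (integral_disintegration rYX); last 2 first.
- apply/measurable_EFinP/measurable_funM; first exact: measurableT_comp.
  exact: measurable_qstep_pair.
- by move=> w; rewrite lee_fin mulr_ge0 // ltW // qstep_gt0.
apply: eq_integral => x _ /=.
under eq_integral do rewrite EFinM.
rewrite ge0_integralZl ?integral_qstep ?mule1 //.
- exact/measurable_EFinP/measurable_qstep.
- by move=> y _; rewrite lee_fin ltW // qstep_gt0.
- by rewrite lee_fin.
Qed.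

Let qh_ge0 x y : (0 <= q x y * h x)%R.
Proof. by rewrite mulr_ge0 // ltW // qstep_gt0. Qed.

Lemma gstepE y : (g' y)%:E = \int[kXY y]_x (q x y * h x)%:E.
Proof.
rewrite fineK // ge0_fin_numE ?qh_fin //.
by apply: integral_ge0 => x _; rewrite lee_fin mulr_ge0 // ltW // qstep_gt0.
Qed.

Let measurable_qh y : measurable_fun [set: TX] (fun x => q x y * h x)%R.
Proof. by apply: measurable_funM => //; exact: measurable_funM. Qed.

Lemma measurable_gstep : measurable_fun [set: TY] g'.
Proof.
apply: measurableT_comp => //.
apply: (measurable_fun_integral_sfinite_kernel
  (fun w : TY * TX => (q w.2 w.1 * h w.2)%:E) kXY).
- by move=> w; rewrite lee_fin mulr_ge0 // ltW // qstep_gt0.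
- apply/measurable_EFinP/measurable_funM; last exact: measurableT_comp.
  apply: measurable_funM; first exact: measurableT_comp.
  exact: measurableT_comp measurable_kintV measurable_snd.
Qed.

Lemma gstep_gt0 y : (0 < g' y)%R.
Proof.
apply: fine_gt0; rewrite qh_fin andbT integral_gt0 ?prob_kernel ?lte01 // => x.
by rewrite mulr_gt0 // qstep_gt0.
Qed.

Lemma integral_qstep_snd (phi : TY -> R) : measurable_fun [set: TY] phi ->
  (forall y, (0 <= phi y)%R) ->
  \int[P]_w (q w.1 w.2 * h w.1 * phi w.2)%:E = \int[PY]_y (g' y * phi y)%:E.
Proof.
move=> mphi phi_ge0; rewrite (integral_disintegration_swap rXY); last 2 first.
- apply/measurable_EFinP/measurable_funM; last exact: measurableT_comp.
  apply: measurable_funM; first exact: measurable_qstep_pair.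
  exact: measurableT_comp.
- by move=> w; rewrite lee_fin mulr_ge0 ?qh_ge0.
apply: eq_integral => y _ /=.
under eq_integral do rewrite EFinM.
rewrite EFinM gstepE ge0_integralZr //.
- exact/measurable_EFinP/measurable_qh.
- by move=> x _; rewrite lee_fin.
- by rewrite lee_fin.
Qed.

Lemma integral_gstep : \int[PY]_y (g' y)%:E = 1.
Proof.
transitivity (\int[PY]_y (g' y * 1)%:E).
  by apply: eq_integral => y _; rewrite mulr1.
rewrite -integral_qstep_snd // -int_h -integral_qstep_fst //; last first.
  by move=> x; exact: ltW.
by apply: eq_integral => w _; rewrite mulr1 mulrC.
Qed.

Lemma integral_kint_setX (A : set TX) : measurable A ->
  \int[PX]_(x in A) (kint kYX g x)%:E =
  \int[P]_(w in A `*` [set: TY]) (g w.2)%:E.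
Proof.
move=> mA; rewrite integral_EFin_indic [RHS]integral_EFin_indic.
rewrite -integral_qstep_fst; last 2 first.
- by apply: measurable_funM => //; exact: measurable_kint.
- by move=> x; rewrite mulr_ge0 ?kint_ge0.
apply: eq_integral => w _; rewrite [in RHS]indicE in_setX in_setT andbT -indicE.
by congr EFin; rewrite -mulrA [(_ * q _ _)%R]mulrC divfK // gt_eqF // kintg_gt0.
Qed.

Lemma integrable_kint : \int[PY]_y (g y)%:E < +oo ->
  PX.-integrable [set: TX] (fun x => (kint kYX g x)%:E).
Proof.
move=> g_int; apply/integrableP; split.
  exact/measurable_EFinP/measurable_kint.
under eq_integral do rewrite gee0_abs ?lee_fin ?kint_ge0 //.
rewrite integral_kint_setX // setXTT.
rewrite -(@ge0_integral_distribution _ _ _ _ _ P (@projY _ _ TX TY)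
  (fun y => (g y)%:E)) //.
- exact/measurable_EFinP.
- by move=> y; rewrite lee_fin ltW.
Qed.

End recursion_step.

Section recursion_monotone_step.
Local Open Scope ereal_scope.
Context d1 d2 (TX : measurableType d1) (TY : measurableType d2) (R : realType).
Variables (P : probability (TX * TY)%type R)
  (kYX : R.-pker TX ~> TY) (kXY : R.-pker TY ~> TX) (h : TX -> R).
Hypotheses (rYX : is_rcd_YgivenX P kYX) (rXY : is_rcd_XgivenY P kXY)
  (mh : measurable_fun [set: TX] h) (h_gt0 : forall x, (0 < h x)%R)
  (int_h : \int[margX P]_x (h x)%:E = 1).

Local Notation PX := (margX P).
Local Notation PY := (margY P).

Variable g : TY -> R.
Local Notation q := (qstep kYX g).
Local Notation g' := (gstep kYX kXY h g).
Local Notation q' := (qstep kYX g').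

Hypotheses (mg : measurable_fun [set: TY] g) (g_gt0 : forall y, (0 < g y)%R)
  (g_fin : forall x, \int[kYX x]_y (g y)%:E < +oo)
  (qh_fin : forall y, \int[kXY y]_x (q x y * h x)%:E < +oo)
  (g'_fin : forall x, \int[kYX x]_y (g' y)%:E < +oo)
  (int_g : \int[PY]_y (g y)%:E = 1).

Let mg' : measurable_fun [set: TY] g'. Proof. exact: measurable_gstep. Qed.
Let g'_gt0 y : (0 < g' y)%R. Proof. exact: gstep_gt0. Qed.

Let hL x := (h x * ln (kint kYX g' x / kint kYX g x))%R.

Let measurable_hL : measurable_fun [set: TX] hL.
Proof.
apply: measurable_funM => //; apply: measurableT_comp => //.
apply: measurable_funM; first exact: measurable_kint.
exact/measurable_funV/measurable_kint.
Qed.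

Let hL_bound w : ((hL^\- w.1 + 2 * h w.1) * q w.1 w.2 <=
  hL^\+ w.1 * q w.1 w.2 + h w.1 * q' w.1 w.2
  + q w.1 w.2 * h w.1 * (g w.2 / g' w.2))%R.
Proof.
case: w => x y /=; rewrite /qstep -/(kint kYX g x) -/(kint kYX g' x).
have hLE : (hL^\+ x = hL^\- x + hL x)%R.
  by have := congr1 (fun f => f x) (funrposBneg hL); rewrite /= !fctE => <-; ring.
rewrite {}hLE /hL.
have c_gt0 : (0 < kint kYX g x)%R by exact: kint_gt0.
have c'_gt0 : (0 < kint kYX g' x)%R by exact: kint_gt0.
have := ln_ge2_sub (divr_gt0 c'_gt0 c_gt0) (divr_gt0 (g'_gt0 y) (g_gt0 y)).
move: (hL^\- x)%R c_gt0 c'_gt0 (g_gt0 y) (g'_gt0 y) (h_gt0 x).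
move: (kint kYX g x) (kint kYX g' x) (g y) (g' y) (h x) => c c' b b' a N.
move=> c0 c'0 b0 b'0 a0 ln_ge.
have -> : (a * (b' / c') = a * (b / c) * (b' / b / (c' / c)))%R.
  by field; rewrite !gt_eqF.
have -> : (b / c * a * (b / b') = a * (b / c) * (b' / b)^-1)%R.
  by field; rewrite !gt_eqF.
rewrite -subr_ge0 in ln_ge.
have := mulr_ge0 (ltW (mulr_gt0 a0 (divr_gt0 b0 c0))) ln_ge.
lra.
Qed.

Let integral_h c : (0 <= c)%R -> \int[PX]_x (c * h x)%:E = c%:E.
Proof.
move=> c_ge0; under eq_integral do rewrite EFinM.
rewrite ge0_integralZl ?int_h ?mule1 //; first exact/measurable_EFinP.
by move=> x _; rewrite lee_fin ltW.
Qed.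

Let h_ge0 x : (0 <= h x)%R. Proof. exact/ltW. Qed.
Let q_ge0 x y : (0 <= q x y)%R. Proof. exact/ltW/qstep_gt0. Qed.
Let q'_ge0 x y : (0 <= q' x y)%R. Proof. exact/ltW/qstep_gt0. Qed.
Let g_g'_ge0 y : (0 <= g y / g' y)%R. Proof. by rewrite divr_ge0 // ltW. Qed.

Let mfst (f : TX -> R) : measurable_fun [set: TX] f ->
  measurable_fun [set: TX * TY] (fun w => f w.1).
Proof. by move=> mf; exact: measurableT_comp. Qed.

Let msnd (f : TY -> R) : measurable_fun [set: TY] f ->
  measurable_fun [set: TX * TY] (fun w => f w.2).
Proof. by move=> mf; exact: measurableT_comp. Qed.

Let mq : measurable_fun [set: TX * TY] (fun w => q w.1 w.2).
Proof. exact: measurable_qstep_pair. Qed.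

Let mq' : measurable_fun [set: TX * TY] (fun w => q' w.1 w.2).
Proof. exact: measurable_qstep_pair. Qed.

Let m_g_g' : measurable_fun [set: TY] (fun y => g y / g' y)%R.
Proof. by apply: measurable_funM => //; exact: measurable_funV. Qed.

Let integral_lhs : \int[P]_w ((hL^\- w.1 + 2 * h w.1) * q w.1 w.2)%:E =
  \int[PX]_x (hL^\- x)%:E + 2%:E.
Proof.
have mhLn := measurable_funrneg measurable_hL.
rewrite (integral_qstep_fst rYX mg g_gt0 g_fin
  (psi := fun x => hL^\- x + 2 * h x)%R); last 2 first.
- by apply: measurable_funD => //; exact: measurable_funM.
- by move=> x; rewrite addr_ge0 // mulr_ge0.
under eq_integral do rewrite EFinD.
rewrite ge0_integralD ?integral_h //; last 4 first.
- by move=> x _; rewrite lee_fin.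
- exact/measurable_EFinP.
- by move=> x _; rewrite lee_fin mulr_ge0.
- by apply/measurable_EFinP; exact: measurable_funM.
Qed.

Let integral_rhs :
  \int[P]_w ((hL^\+ w.1 * q w.1 w.2)%:E + (h w.1 * q' w.1 w.2)%:E
             + (q w.1 w.2 * h w.1 * (g w.2 / g' w.2))%:E) =
  \int[PX]_x (hL^\+ x)%:E + 1 + 1.
Proof.
have mhLp := measurable_funrpos measurable_hL.
rewrite ge0_integralD; last 5 first.
- exact: measurableT.
- by move=> w _; rewrite adde_ge0 // lee_fin mulr_ge0.
- apply: emeasurable_funD; apply/measurable_EFinP.
  + by apply: measurable_funM => //; exact: mfst.
  + by apply: measurable_funM => //; exact: mfst.
- by move=> w _; rewrite lee_fin mulr_ge0 // mulr_ge0.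
- apply/measurable_EFinP/measurable_funM; last exact: msnd _ m_g_g'.
  by apply: measurable_funM => //; exact: mfst.
rewrite ge0_integralD; last 5 first.
- exact: measurableT.
- by move=> w _; rewrite lee_fin mulr_ge0.
- by apply/measurable_EFinP/measurable_funM => //; exact: mfst.
- by move=> w _; rewrite lee_fin mulr_ge0.
- by apply/measurable_EFinP/measurable_funM => //; exact: mfst.
rewrite (integral_qstep_fst rYX mg g_gt0 g_fin mhLp) //.
rewrite (integral_qstep_fst rYX mg' g'_gt0 g'_fin mh) // int_h.
rewrite (integral_qstep_snd rXY mh h_gt0 mg g_gt0 g_fin qh_fin m_g_g') // -int_g.
congr (_ + _ + _); apply: eq_integral => y _.
by rewrite mulrC divfK // gt_eqF.
Qed.

Lemma integral_ln_kint_ratio_neg_le_pos :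
  \int[PX]_x (hL^\- x)%:E <= \int[PX]_x (hL^\+ x)%:E.
Proof.
rewrite -(leeD2rE (x := 2%:E)) // -integral_lhs EFinD addeA -integral_rhs.
apply: ge0_le_integral => //.
- by move=> w _; rewrite lee_fin mulr_ge0 // addr_ge0 // mulr_ge0.
- apply/measurable_EFinP/measurable_funM => //; apply: measurable_funD.
    exact: mfst _ (measurable_funrneg measurable_hL).
  by apply: measurable_funM => //; exact: mfst.
- apply/measurable_EFinP/measurable_funD; first apply/measurable_funD.
  + apply: measurable_funM => //.
    exact: mfst _ (measurable_funrpos measurable_hL).
  + by apply: measurable_funM => //; exact: mfst.
  + apply: measurable_funM; last exact: msnd _ m_g_g'.
    by apply: measurable_funM => //; exact: mfst.
- by move=> w _; rewrite -!EFinD lee_fin; exact: hL_bound.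
Qed.

End recursion_monotone_step.

Section recursion.
Local Open Scope ereal_scope.
Context d1 d2 (TX : measurableType d1) (TY : measurableType d2) (R : realType).
Variables (P : probability (TX * TY)%type R)
  (kYX : R.-pker TX ~> TY) (kXY : R.-pker TY ~> TX)
  (h : TX -> R) (g0 : TY -> R).
Hypotheses (rYX : is_rcd_YgivenX P kYX) (rXY : is_rcd_XgivenY P kXY)
  (mh : measurable_fun [set: TX] h) (h_gt0 : forall x, (0 < h x)%R)
  (int_h : \int[margX P]_x (h x)%:E = 1)
  (mg0 : measurable_fun [set: TY] g0) (g0_gt0 : forall y, (0 < g0 y)%R)
  (int_g0 : \int[margY P]_y (g0 y)%:E = 1).

Local Notation PX := (margX P).
Local Notation PY := (margY P).
Local Notation g := (gseq kYX kXY h g0).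

Hypotheses
  (g_fin : forall n x, \int[kYX x]_y (g n y)%:E < +oo)
  (qh_fin : forall n y,
     \int[kXY y]_x (qseq kYX kXY h g0 n x y * h x)%:E < +oo).

Lemma gseq_measurable_gt0 n :
  measurable_fun [set: TY] (g n) /\ forall y, (0 < g n y)%R.
Proof.
elim: n => [//|n [mg g_gt0]]; split.
- exact (measurable_gstep kXY mh h_gt0 mg g_gt0 (g_fin n)).
- exact (gstep_gt0 mh h_gt0 mg g_gt0 (g_fin n) (qh_fin n)).
Qed.

Lemma measurable_gseq n : measurable_fun [set: TY] (g n).
Proof. by case: (gseq_measurable_gt0 n). Qed.

Lemma gseq_gt0 n y : (0 < g n y)%R.
Proof. by case: (gseq_measurable_gt0 n). Qed.

Lemma integral_gseq n : \int[PY]_y (g n y)%:E = 1.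
Proof.
case: n => [//|n].
exact (integral_gstep rYX rXY mh h_gt0 int_h (measurable_gseq n) (gseq_gt0 n)
  (g_fin n) (qh_fin n)).
Qed.

Lemma qseq_density n x :
  measurable_fun [set: TY] (qseq kYX kXY h g0 n x)
  /\ (forall y, (0 < qseq kYX kXY h g0 n x y)%R)
  /\ \int[kYX x]_y (qseq kYX kXY h g0 n x y)%:E = 1.
Proof.
split; first exact: measurable_qstep (measurable_gseq n) x.
split; first exact: qstep_gt0 (measurable_gseq n) (gseq_gt0 n) (g_fin n) x.
exact: integral_qstep (measurable_gseq n) (gseq_gt0 n) (g_fin n) x.
Qed.

Lemma gseq_density n :
  measurable_fun [set: TY] (g n) /\ (forall y, (0 < g n y)%R)
  /\ \int[PY]_y (g n y)%:E = 1.
Proof.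
by split; [exact: measurable_gseq|split; [exact: gseq_gt0|exact: integral_gseq]].
Qed.

Variable hn : nat -> TX -> R.
Hypotheses (mhn : forall n, measurable_fun [set: TX] (hn n))
  (hnE : forall n (A : set TX), measurable A ->
     \int[PX]_(x in A) (hn n x)%:E
     = \int[P]_(w in A `*` [set: TY]) (g n w.2)%:E)
  (h_lnh_fin : \int[PX]_x (h x * `|ln (h x)|)%:E < +oo)
  (h_lnhn_fin : forall n, \int[PX]_x (h x * `|ln (hn n x)|)%:E < +oo).

(* [kint kYX (g n)] is the version x |-> E_P[g_n(Y) | X = x] of h_n. *)
Lemma kint_ae_hn n :
  ae_eq PX [set: TX] (fun x => (kint kYX (g n) x)%:E) (fun x => (hn n x)%:E).
Proof.
apply: integral_ae_eq => //.
- apply: (integrable_kint rYX (measurable_gseq n) (gseq_gt0 n) (g_fin n)).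
  by rewrite integral_gseq ltry.
- exact/measurable_EFinP.
- move=> A _ mA.
  by rewrite (integral_kint_setX rYX (measurable_gseq n) (gseq_gt0 n) (g_fin n))
    ?hnE.
Qed.

Let kint_ae_hn_comp (F : TX -> R -> R) n :
  ae_eq PX [set: TX] (fun x => (F x (kint kYX (g n) x))%:E)
                     (fun x => (F x (hn n x))%:E).
Proof. by apply: filterS (kint_ae_hn n) => x /[apply] -[->]. Qed.

Let kint_gseq_gt0 n x : (0 < kint kYX (g n) x)%R.
Proof. exact (kint_gt0 (measurable_gseq n) (gseq_gt0 n) (g_fin n) x). Qed.

Let measurable_kint_gseq n : measurable_fun [set: TX] (kint kYX (g n)).
Proof. exact (measurable_kint kYX (measurable_gseq n) (gseq_gt0 n)). Qed.

Let measurable_h_ln (u : TX -> R) : measurable_fun [set: TX] u ->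
  measurable_fun [set: TX] (fun x => h x * `|ln (u x)|)%R.
Proof.
move=> mu; apply: measurable_funM => //.
by apply: measurableT_comp => //; exact: measurableT_comp.
Qed.

Let measurable_h_ln_div (u : TX -> R) : measurable_fun [set: TX] u ->
  measurable_fun [set: TX] (fun x => h x * ln (h x / u x))%R.
Proof.
move=> mu; apply: measurable_funM => //; apply: measurableT_comp => //.
by apply: measurable_funM => //; exact: measurable_funV.
Qed.

Lemma integrable_h_ln_kint n :
  PX.-integrable [set: TX] (fun x => (h x * `|ln (kint kYX (g n) x)|)%:E).
Proof.
have mhc := measurable_h_ln (measurable_kint_gseq n).
apply/integrableP; split; first exact/measurable_EFinP.
rewrite (eq_integral (fun x => (h x * `|ln (kint kYX (g n) x)|)%:E)); last first.
  by move=> x _; rewrite gee0_abs // lee_fin mulr_ge0 // ltW.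
rewrite (ae_eq_integral _ _ measurableT _ _
  (kint_ae_hn_comp (fun x t => h x * `|ln t|)%R n)) //.
- exact/measurable_EFinP.
- exact/measurable_EFinP/measurable_h_ln.
Qed.

Let integrable_h_ln_h :
  PX.-integrable [set: TX] (fun x => (h x * `|ln (h x)|)%:E).
Proof.
apply/integrableP; split; first exact/measurable_EFinP/measurable_h_ln.
rewrite (eq_integral (fun x => (h x * `|ln (h x)|)%:E)) //.
by move=> x _; rewrite gee0_abs // lee_fin mulr_ge0 // ltW.
Qed.

Lemma KL_hnE n :
  KL PX h (hn n) = \int[PX]_x (h x * ln (h x / kint kYX (g n) x))%:E.
Proof.
apply: ae_eq_integral => //.
- exact/measurable_EFinP/measurable_h_ln_div.
- exact/measurable_EFinP/measurable_h_ln_div.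
- exact: ae_eq_sym (kint_ae_hn_comp (fun x t => h x * ln (h x / t))%R n).
Qed.

Lemma KL_succ_le n : KL PX h (hn n.+1) <= KL PX h (hn n).
Proof.
rewrite !KL_hnE.
set c := kint kYX (g n); set c' := kint kYX (g n.+1).
have c_gt0 x : (0 < c x)%R by exact: kint_gseq_gt0.
have c'_gt0 x : (0 < c' x)%R by exact: kint_gseq_gt0.
have h_ge0 x : (0 <= h x)%R by exact/ltW.
have int_h_c' := integrable_mul_ln_div mh mh (measurable_kint_gseq n.+1)
  h_ge0 h_gt0 c'_gt0 integrable_h_ln_h (integrable_h_ln_kint n.+1).
have int_c'_c := integrable_mul_ln_div mh (measurable_kint_gseq n.+1)
  (measurable_kint_gseq n) h_ge0 c'_gt0 c_gt0
  (integrable_h_ln_kint n.+1) (integrable_h_ln_kint n).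
rewrite [leRHS](eq_integral (fun x => (h x * ln (h x / c' x))%:E
  + (h x * ln (c' x / c x))%:E)); last first.
  move=> x _; rewrite -EFinD -mulrDr -lnM ?posrE ?divr_gt0 //.
  by rewrite mulrA divfK // gt_eqF.
rewrite (integralD measurableT int_h_c' int_c'_c); apply: leeDl.
apply: integral_ge0_funrneg_le_funrpos => //.
exact: (integral_ln_kint_ratio_neg_le_pos rYX rXY mh h_gt0 int_h
  (measurable_gseq n) (gseq_gt0 n) (g_fin n) (qh_fin n) (g_fin n.+1)
  (integral_gseq n)).
Qed.

End recursion.

Theorem theorem3 (R : realType) (d1 d2 : measure_display)
  (TX : measurableType d1) (TY : measurableType d2)
  (P : probability (TX * TY)%type R)
  (kYX : R.-pker TX ~> TY) (kXY : R.-pker TY ~> TX)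
  (h : TX -> R) (g0 : TY -> R) :
  is_rcd_YgivenX P kYX ->
  is_rcd_XgivenY P kXY ->
  measurable_fun [set: TX] h -> (forall x, 0 < h x) ->
  (\int[margX P]_x (h x)%:E = 1)%E ->
  measurable_fun [set: TY] g0 -> (forall y, 0 < g0 y) ->
  (\int[margY P]_y (g0 y)%:E = 1)%E ->
  (forall n x, (\int[kYX x]_z (gseq kYX kXY h g0 n z)%:E < +oo)%E) ->
  (forall n y,
     (\int[kXY y]_x (qseq kYX kXY h g0 n x y * h x)%:E < +oo)%E) ->
  ((forall n x, measurable_fun [set: TY] (qseq kYX kXY h g0 n x)
       /\ (forall y, 0 < qseq kYX kXY h g0 n x y)
       /\ (\int[kYX x]_y (qseq kYX kXY h g0 n x y)%:E = 1)%E) /\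
   (forall n, (1 <= n)%N ->
       measurable_fun [set: TY] (gseq kYX kXY h g0 n)
       /\ (forall y, 0 < gseq kYX kXY h g0 n y)
       /\ (\int[margY P]_y (gseq kYX kXY h g0 n y)%:E = 1)%E)) /\
  (forall hn : nat -> TX -> R,
     (forall n, measurable_fun [set: TX] (hn n)) ->
     (forall n x, 0 <= hn n x) ->
     (forall n (A : set TX), measurable A ->
        (\int[margX P]_(x in A) (hn n x)%:E
         = \int[P]_(w in A `*` [set: TY]) (gseq kYX kXY h g0 n w.2)%:E)%E) ->
     (\int[margX P]_x (h x * `|ln (h x)|)%:E < +oo)%E ->
     (forall n, (\int[margX P]_x (h x * `|ln (hn n x)|)%:E < +oo)%E) ->
     (forall n, (\int[margY P]_y
        (gseq kYX kXY h g0 n.+1 y *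
         `|ln (gseq kYX kXY h g0 n.+1 y / gseq kYX kXY h g0 n y)|)%:E
        < +oo)%E) ->
     forall n, (KL (margX P) h (hn n.+1) <= KL (margX P) h (hn n))%E).
Proof.
move=> rYX rXY mh h_gt0 int_h mg0 g0_gt0 int_g0 g_fin qh_fin.
split; first split.
- exact: qseq_density.
- by move=> n _; exact: gseq_density.
- move=> hn mhn _ hnE h_lnh_fin h_lnhn_fin _.
  exact: (KL_succ_le rYX rXY mh h_gt0 int_h mg0 g0_gt0 int_g0 g_fin qh_fin
    mhn hnE h_lnh_fin h_lnhn_fin).
Qed.
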